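(* Let $e(x,y)=(\alpha x+p(y),\beta y+\eta)$, $\alpha\beta\ne0$, be an elementary map of $\mathbb C^2$ with $e\circ e=\mathrm{id}$ and $e\neq\mathrm{id}$. Then $e$ belongs to one of the following three classes: (1) $e(x,y)=(-x+p(y),\,y)$ with $p$ any polynomial; (2) $e(x,y)=(x+p(y),\,-y+\eta)$ with $p$ odd around $\eta/2$, i.e. $p(\eta-y)=-p(y)$; (3) $e(x,y)=(-x+p(y),\,-y+\eta)$ with $p$ even around $\eta/2$, i.e. $p(\eta-y)=p(y)$. Conversely every map of these forms is an involution. Moreover, if $p$ has degree $l\ge2$, then $e$ is conjugate by an element of $C_{\mathcal S}(t)$ to a map of the following normal form, respectively: (1) $(x,y)\mapsto(-x+p(y),y)$ with $p(y)=y^l+O(y^{l-2})$ (monic, with vanishing coefficient of $y^{l-1}$); (2) $(x,y)\mapsto(x+p(y),-y)$ with $p$ an odd polynomial with leading coefficient $1$; (3) $(x,y)\mapsto(-x+p(y),-y)$ with $p$ an even polynomial with leading coefficient $1$. These normal forms are unique up to replacing $p(y)$ by $\zeta\,p(y/\zeta)$, where $\zeta$ is any root of unity with $\zeta^{l-1}=1$.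
   Context: $C_{\mathcal S}(t)$ denotes the centralizer of $t(x,y)=(y,x)$ among the affine elementary maps; concretely it consists of the maps $(x,y)\mapsto(ax+b,\,ay+b)$ with $a\ne0$. Two maps $f,g$ are $C_{\mathcal S}(t)$-conjugate if $g=s f s^{-1}$ for some $s\in C_{\mathcal S}(t)$. *)

From HB Require Import structures.
From mathcomp Require Import all_boot all_order all_algebra.
From mathcomp Require Import complex.
From mathcomp Require Import reals.
Set Implicit Arguments. Unset Strict Implicit. Unset Printing Implicit Defensive.
Import Order.TTheory GRing.Theory Num.Theory.
Local Open Scope ring_scope.

Definition elem (R : realType) (alpha : R[i]) (p : {poly R[i]}) (beta eta : R[i])
  : R[i] * R[i] -> R[i] * R[i] :=
  fun z => (alpha * z.1 + p.[z.2], beta * z.2 + eta).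

(* Elements of C_S(t): s(x,y) = (a x + b, a y + b), and its inverse. *)
Definition cst (R : realType) (a b : R[i]) : R[i] * R[i] -> R[i] * R[i] :=
  fun z => (a * z.1 + b, a * z.2 + b).
Definition cst_inv (R : realType) (a b : R[i]) : R[i] * R[i] -> R[i] * R[i] :=
  fun z => ((z.1 - b) / a, (z.2 - b) / a).

Definition CS_conj (R : realType) (f g : R[i] * R[i] -> R[i] * R[i]) : Prop :=
  exists a b : R[i], a != 0 /\ forall z, g z = cst a b (f (cst_inv a b z)).

Inductive invclass := Cl1 | Cl2 | Cl3.

Definition in_class (R : realType) (c : invclass) (alpha : R[i]) (p : {poly R[i]})
  (beta eta : R[i]) : Prop :=
  match c with
  | Cl1 => alpha = -1 /\ beta = 1 /\ eta = 0
  | Cl2 => alpha = 1 /\ beta = -1 /\ (forall y, p.[eta - y] = - p.[y])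
  | Cl3 => alpha = -1 /\ beta = -1 /\ (forall y, p.[eta - y] = p.[y])
  end.

Definition alpha_of (R : realType) (c : invclass) : R[i] :=
  match c with Cl1 => -1 | Cl2 => 1 | Cl3 => -1 end.
Definition beta_of (R : realType) (c : invclass) : R[i] :=
  match c with Cl1 => 1 | Cl2 => -1 | Cl3 => -1 end.

Definition nf_map (R : realType) (c : invclass) (q : {poly R[i]}) :=
  elem (alpha_of R c) q (beta_of R c) 0.

Definition nf_poly (R : realType) (c : invclass) (l : nat) (q : {poly R[i]}) : Prop :=
  size q = l.+1 /\ lead_coef q = 1 /\
  match c with
  | Cl1 => q`_(l.-1) = 0
  | Cl2 => forall y, q.[- y] = - q.[y]
  | Cl3 => forall y, q.[- y] = q.[y]
  end.

From HB Require Import structures.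
From mathcomp Require Import all_boot all_order all_algebra.
From mathcomp Require Import complex.
From mathcomp Require Import reals.
From mathcomp Require Import ring.
Import Order.TTheory GRing.Theory Num.Theory.
Local Open Scope ring_scope.
Set Implicit Arguments. Unset Strict Implicit.

(* Since e (e (x, y)) = (al^2 x + al p(y) + p(be y + eta), be^2 y + (be + 1) eta),
   e is an involution iff al^2 = be^2 = 1, (be + 1) eta = 0 and
   al p(y) + p(be y + eta) = 0; the four sign choices give the identity and the
   three classes.  Conjugating e by s = cst a b keeps al and be and replaces p by
   y |-> a p((y - b)/a) + (1 - al) b and eta by a eta + (1 - be) b.  Taking a with
   a^(l-1) = lead_coef p makes p monic, and b can be chosen to cancel eta
   (classes 2 and 3) or the coefficient of y^(l-1) (class 1).  Between two normal
   forms the same constraints force b = 0 and a^(l-1) = 1. *)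

Lemma coef_XsubC_exp_lead (R : idomainType) (d : R) n : (('X - d%:P) ^+ n)`_n = 1.
Proof.
have := lead_coef_exp ('X - d%:P) n.
by rewrite lead_coefXsubC expr1n lead_coefE size_exp_XsubC.
Qed.

Lemma coef_XsubC_exp_subleading (R : idomainType) (d : R) n :
  (('X - d%:P) ^+ n.+1)`_n = - (n.+1%:R * d).
Proof.
elim: n => [|n IHn]; first by rewrite expr1 coefB coefX coefC /= sub0r mul1r.
rewrite exprSr mulrBr coefB coefMX coefMC /= IHn coef_XsubC_exp_lead mulrSr.
ring.
Qed.

Lemma subleading_coef_comp_affine (R : idomainType) (p : {poly R}) (c d : R) m :
  size p = m.+2 ->
  (p \Po (c *: ('X - d%:P)))`_m = p`_m * c ^+ m - p`_m.+1 * c ^+ m.+1 * (m.+1%:R * d).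
Proof.
move=> sp; rewrite coef_comp_poly sp !big_ord_recr /= big1 ?add0r => [|i _].
  rewrite !exprZn !coefZ coef_XsubC_exp_subleading.
  rewrite coef_XsubC_exp_lead; ring.
by rewrite exprZn coefZ [X in _ * (_ * X)]nth_default ?mulr0 // size_exp_XsubC.
Qed.

Section ConjPoly.
Variable F : fieldType.
Implicit Types (p : {poly F}) (a b k y : F).

(* For [k = (1 - alpha) * b], the polynomial of
   [cst a b \o elem alpha p beta eta \o cst_inv a b]. *)
Definition conj_poly p a b k : {poly F} :=
  a *: (p \Po (a^-1 *: ('X - b%:P))) + k%:P.

Lemma horner_conj_poly p a b k y : (conj_poly p a b k).[y] = a * p.[(y - b) / a] + k.
Proof.
rewrite hornerD hornerZ horner_comp hornerZ hornerD hornerN hornerX !hornerC.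
by rewrite [a^-1 * _]mulrC.
Qed.

Lemma size_scale_XsubC a b : a != 0 -> size (a *: ('X - b%:P)) = 2.
Proof. by move=> a0; rewrite size_scale // size_XsubC. Qed.

Lemma size_conj_poly p a b k :
  a != 0 -> (1 < size p)%N -> size (conj_poly p a b k) = size p.
Proof.
move=> a0 sp.
rewrite size_polyDl size_scale ?size_comp_poly2 ?size_scale_XsubC ?invr_eq0 //.
by rewrite (leq_ltn_trans (size_polyC_leq1 k)).
Qed.

Lemma lead_coef_conj_poly p a b k m : a != 0 -> size p = m.+2 ->
  lead_coef (conj_poly p a b k) = lead_coef p / a ^+ m.
Proof.
move=> a0 sp; have a'0 : a^-1 != 0 by rewrite invr_eq0.
rewrite lead_coefDl; last first.
  rewrite size_scale // size_comp_poly2 ?size_scale_XsubC // sp.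
  exact: leq_ltn_trans (size_polyC_leq1 k) _.
rewrite lead_coefZ lead_coef_comp ?size_scale_XsubC // lead_coefZ lead_coefXsubC.
rewrite mulr1 sp /=.
by rewrite exprSr exprVn; field; rewrite expf_neq0 ?a0.
Qed.

Lemma subleading_coef_conj_poly p a b k m : a != 0 -> size p = m.+2 -> (0 < m)%N ->
  (conj_poly p a b k)`_m = (a * p`_m - m.+1%:R * p`_m.+1 * b) / a ^+ m.
Proof.
move=> a0 sp m0; rewrite coefD coefZ coefC (gtn_eqF m0) addr0.
by rewrite subleading_coef_comp_affine // exprSr !exprVn; field; rewrite expf_neq0 ?a0.
Qed.

Lemma horner_conj_poly_reflect p a b k eta y : a != 0 -> 2 * b + a * eta = 0 ->
  (conj_poly p a b k).[- y] = a * p.[eta - (y - b) / a] + k.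
Proof.
move=> a0 shift; rewrite horner_conj_poly; congr (_ * p.[_] + _).
have etaE : eta = - (2 * b) / a.
  by apply: (mulIf a0); rewrite divfK // mulrC; apply/eqP; rewrite -addr_eq0 addrC shift.
by rewrite etaE; field.
Qed.

End ConjPoly.

Lemma poly_eq_horner (R : numDomainType) (p q : {poly R}) :
  (forall x, p.[x] = q.[x]) -> p = q.
Proof.
move=> pq; apply/eqP; rewrite -subr_eq0; apply/eqP.
apply: (@roots_geq_poly_eq0 _ _ [seq i%:R | i <- iota 0 (size (p - q))]).
- by apply/allP => x _; rewrite /root hornerD hornerN pq subrr.
- by rewrite map_inj_uniq ?iota_uniq // => i j /eqP; rewrite eqr_nat => /eqP.
- by rewrite size_map size_iota.
Qed.

Section Centralizer.
Variable R : realType.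
Implicit Types (a b : R[i]) (z : R[i] * R[i]) (f g h : R[i] * R[i] -> R[i] * R[i]).

Lemma cst_invE a b z : a != 0 -> cst_inv a b z = cst a^-1 (- (b / a)) z.
Proof. by move=> a0; case: z => x y; rewrite /cst /cst_inv /=; congr (_, _); field. Qed.

Lemma cstE a b z : a != 0 -> cst a b z = cst_inv a^-1 (- (b / a)) z.
Proof.
by move=> a0; case: z => x y; rewrite /cst /cst_inv /=; congr (_, _); field; rewrite a0.
Qed.

Lemma cstK a b : a != 0 -> cancel (cst a b) (cst_inv a b).
Proof. by move=> a0 [x y]; rewrite /cst /cst_inv /=; congr (_, _); field. Qed.

Lemma cst_comp a b a' b' z : cst a' b' (cst a b z) = cst (a' * a) (a' * b + b') z.
Proof. by case: z => x y; rewrite /cst /=; congr (_, _); ring. Qed.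

Lemma cst_inv_comp a b a' b' z : a != 0 -> a' != 0 ->
  cst_inv a b (cst_inv a' b' z) = cst_inv (a' * a) (a' * b + b') z.
Proof.
by move=> a0 a'0; case: z => x y; rewrite /cst_inv /=; congr (_, _); field; rewrite a0 a'0.
Qed.

Lemma CS_conj_sym f g : CS_conj f g -> CS_conj g f.
Proof.
move=> [a [b [a0 fg]]]; exists a^-1, (- (b / a)); split; first by rewrite invr_eq0.
by move=> z; rewrite -cst_invE // -cstE // fg !cstK.
Qed.

Lemma CS_conj_trans f g h : CS_conj f g -> CS_conj g h -> CS_conj f h.
Proof.
move=> [a [b [a0 fg]]] [a' [b' [a'0 gh]]]; exists (a' * a), (a' * b + b').
by split=> [|z]; rewrite ?mulf_neq0 // gh fg cst_comp cst_inv_comp.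
Qed.

End Centralizer.

Section Elementary.
Variable R : realType.
Local Notation C := R[i].
Implicit Types (al be eta : C) (p q : {poly C}).

Lemma elem_involutiveP al be eta p :
  (forall z, elem al p be eta (elem al p be eta z) = z) <->
  [/\ al ^+ 2 = 1, be ^+ 2 = 1, (be + 1) * eta = 0 &
      forall y, al * p.[y] + p.[be * y + eta] = 0].
Proof.
split=> [inv | [al2 be2 eta0 hp] [x y]]; last first.
  rewrite /elem /=; congr (_, _).
    by rewrite mulrDr mulrA -expr2 al2 mul1r -addrA hp addr0.
  by transitivity (be ^+ 2 * y + (be + 1) * eta); [ring | rewrite be2 eta0 mul1r addr0].
have inv1 x y : al * (al * x + p.[y]) + p.[be * y + eta] = x.
  exact: (congr1 fst (inv (x, y))).
have inv2 y : be * (be * y + eta) + eta = y by exact: (congr1 snd (inv (0, y))).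
split=> [||| y].
- transitivity ((al * (al * 1 + p.[0]) + p.[be * 0 + eta]) -
                (al * (al * 0 + p.[0]) + p.[be * 0 + eta])); first ring.
  by rewrite !inv1 subr0.
- transitivity ((be * (be * 1 + eta) + eta) - (be * (be * 0 + eta) + eta)); first ring.
  by rewrite !inv2 subr0.
- by transitivity (be * (be * 0 + eta) + eta); [ring | exact: inv2].
- by transitivity (al * (al * 0 + p.[y]) + p.[be * y + eta]); [ring | exact: inv1].
Qed.

Lemma involutive_elem_classes al be eta p :
  (forall z, elem al p be eta (elem al p be eta z) = z) ->
  ~ (forall z, elem al p be eta z = z) ->
  in_class Cl1 al p be eta \/ in_class Cl2 al p be eta \/ in_class Cl3 al p be eta.
Proof.
move=> /elem_involutiveP [al2 be2 eta0 hp] not_id.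
have double_eq0 (x : C) : x + x = 0 -> x = 0.
  by rewrite -mulr2n => /eqP; rewrite mulrn_eq0 => /eqP.
have hp_refl y : be = -1 -> p.[eta - y] = - (al * p.[y]).
  move=> beN; have := hp y; rewrite beN mulN1r addrC => /eqP.
  by rewrite addr_eq0 [- y + _]addrC => /eqP.
have [alE|alE] : al = 1 \/ al = -1 by apply/pred2P; rewrite -sqrf_eq1 al2.
all: have [beE|beE] : be = 1 \/ be = -1 by apply/pred2P; rewrite -sqrf_eq1 be2.
- have etaE : eta = 0 by apply: double_eq0; rewrite -eta0 beE mulrDl mul1r.
  case: not_id => -[x y]; rewrite /elem alE beE etaE /= !mul1r addr0.
  have := hp y; rewrite alE beE etaE !mul1r addr0 => /double_eq0 ->.
  by rewrite addr0.
- by right; left; do 2!split=> //; move=> y; rewrite hp_refl // alE mul1r.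
- by left; do 2!split=> //; apply: double_eq0; rewrite -eta0 beE mulrDl mul1r.
- by right; right; do 2!split=> //; move=> y; rewrite hp_refl // alE mulN1r opprK.
Qed.

Lemma in_class_involutive c al be eta p :
  in_class c al p be eta -> forall z, elem al p be eta (elem al p be eta z) = z.
Proof.
case: c => [[-> [-> ->]]|[-> [-> hp]]|[-> [-> hp]]]; apply/elem_involutiveP.
- by split=> [|||y]; rewrite ?mulr0 ?sqrrN ?expr1n // mul1r addr0 mulN1r addNr.
- split=> [|||y]; rewrite ?sqrrN ?expr1n ?addNr ?mul0r //.
  by rewrite mulN1r [- y + _]addrC hp mul1r addrN.
- split=> [|||y]; rewrite ?sqrrN ?expr1n ?addNr ?mul0r //.
  by rewrite !mulN1r [- y + _]addrC hp addNr.
Qed.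

Lemma in_class_coefs c al be eta p :
  in_class c al p be eta -> al = alpha_of R c /\ be = beta_of R c.
Proof. by case: c => -[-> [-> _]]. Qed.

Lemma CS_conj_elemP al be eta p q :
  CS_conj (elem al p be eta) (elem al q be 0) <->
  exists a b, [/\ a != 0, (1 - be) * b + a * eta = 0 &
                  q = conj_poly p a b ((1 - al) * b)].
Proof.
rewrite /CS_conj /elem /cst /cst_inv.
split=> [[a [b [a0 conj]]] | [a [b [a0 shift ->]]]].
  exists a, b; split=> //.
    have := congr1 snd (conj (b, b)); rewrite /= subrr mul0r mulr0 add0r addr0 => h.
    by transitivity (a * eta + b - be * b); [ring | rewrite -h subrr].
  apply: poly_eq_horner => y; rewrite horner_conj_poly.
  have := congr1 fst (conj (0, y)); rewrite /= mulr0 add0r => ->.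
  by field.
exists a, b; split=> // -[x y] /=; congr (_, _).
  by rewrite horner_conj_poly; field.
by transitivity (be * y + ((1 - be) * b + a * eta)); [rewrite shift; ring | field].
Qed.

Lemma exists_nf_conj c eta p l :
  in_class c (alpha_of R c) p (beta_of R c) eta -> (2 <= l)%N -> size p = l.+1 ->
  exists q, nf_poly c l q /\
            CS_conj (elem (alpha_of R c) p (beta_of R c) eta) (nf_map c q).
Proof.
case: l => [|m] // hc m0 sp.
have lc0 : lead_coef p != 0 by rewrite lead_coef_eq0 -size_poly_gt0 sp.
pose a := m.-root (lead_coef p).
have am : a ^+ m = lead_coef p by rewrite rootCK.
have a0 : a != 0 by apply: contra_neq lc0 => a0; rewrite -am a0 expr0n gtn_eqF.
suff [b [shift nfq]] : exists b, (1 - beta_of R c) * b + a * eta = 0 /\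
    nf_poly c m.+1 (conj_poly p a b ((1 - alpha_of R c) * b)).
  exists (conj_poly p a b ((1 - alpha_of R c) * b)); split=> //.
  by apply/CS_conj_elemP; exists a, b.
have monic_conj b k :
    size (conj_poly p a b k) = m.+2 /\ lead_coef (conj_poly p a b k) = 1.
  by rewrite size_conj_poly ?sp // (lead_coef_conj_poly b k a0 sp) am divff.
case: c hc => /= [[_ [_ ->]] | [_ [_ hp]] | [_ [_ hp]]].
- pose b := a * p`_m / (m.+1%:R * lead_coef p).
  exists b; split; first ring.
  split; first exact: (monic_conj _ _).1.
  split; first exact: (monic_conj _ _).2.
  have lcE : p`_m.+1 = lead_coef p by rewrite lead_coefE sp.
  rewrite subleading_coef_conj_poly // lcE /b.
  by field; rewrite expf_neq0 // lc0 /= addrC natr1 pnatr_eq0.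
all: pose b := - (a * eta) / 2.
all: have shift : 2 * b + a * eta = 0 by rewrite /b; field.
all: exists b; split; first by rewrite /b; field.
all: split; first exact: (monic_conj _ _).1.
all: split; first exact: (monic_conj _ _).2.
all: move=> y; rewrite (horner_conj_poly_reflect _ _ _ a0 shift) hp.
all: by rewrite !horner_conj_poly; ring.
Qed.

Lemma nf_map_CS_conjP c l q1 q2 : (2 <= l)%N -> nf_poly c l q1 -> nf_poly c l q2 ->
  CS_conj (nf_map c q1) (nf_map c q2) <->
  exists zeta, zeta ^+ l.-1 = 1 /\ forall y, q2.[y] = zeta * q1.[y / zeta].
Proof.
case: l => [|m] //= m0 [s1 [lc1 nf1]] [s2 [lc2 nf2]].
rewrite /nf_map CS_conj_elemP; split=> [[a [b [a0 shift q2E]]] | [z [zm q2E]]].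
  have b0 : b = 0.
    have two_neq0 : (1 - -1 : R[i]) != 0.
      by rewrite (_ : 1 - -1 = 2%:R) ?pnatr_eq0 //; ring.
    move: shift nf1 nf2; rewrite mulr0 addr0; case: c q2E => q2E /= shift nf1 nf2.
    - have lc1E : q1`_m.+1 = 1 by rewrite -lc1 lead_coefE s1.
      move: nf2; rewrite q2E subleading_coef_conj_poly // nf1 lc1E mulr0 sub0r mulr1.
      move=> /eqP; rewrite mulf_eq0 invr_eq0 expf_eq0 (negbTE a0) andbF orbF.
      by rewrite oppr_eq0 mulf_eq0 pnatr_eq0 => /eqP.
    - by move/eqP: shift; rewrite mulf_eq0 (negbTE two_neq0) => /eqP.
    - by move/eqP: shift; rewrite mulf_eq0 (negbTE two_neq0) => /eqP.
  have am : a ^+ m = 1.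
    move: lc2; rewrite q2E (lead_coef_conj_poly _ _ a0 s1) lc1 div1r.
    by move/eqP; rewrite invr_eq1 => /eqP.
  by exists a; split=> // y; rewrite q2E horner_conj_poly b0 subr0 mulr0 addr0.
have z0 : z != 0.
  by apply: contra_eq_neq zm => ->; rewrite expr0n gtn_eqF // eq_sym oner_eq0.
exists z, 0; split=> //; first by rewrite !mulr0 addr0.
by apply: poly_eq_horner => y; rewrite horner_conj_poly q2E subr0 !mulr0 addr0.
Qed.

End Elementary.

Theorem proposition3p2 (R : realType) :
  (forall (alpha beta eta : R[i]) (p : {poly R[i]}),
      alpha * beta != 0 ->
      (forall z, elem alpha p beta eta (elem alpha p beta eta z) = z) ->
      ~ (forall z, elem alpha p beta eta z = z) ->
      in_class Cl1 alpha p beta eta \/ in_class Cl2 alpha p beta eta \/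
      in_class Cl3 alpha p beta eta) /\
  (forall (c : invclass) (alpha beta eta : R[i]) (p : {poly R[i]}),
      in_class c alpha p beta eta ->
      forall z, elem alpha p beta eta (elem alpha p beta eta z) = z) /\
  (forall (c : invclass) (alpha beta eta : R[i]) (p : {poly R[i]}) (l : nat),
      in_class c alpha p beta eta ->
      (2 <= l)%N -> size p = l.+1 ->
      (exists q : {poly R[i]},
          nf_poly c l q /\ CS_conj (elem alpha p beta eta) (nf_map c q)) /\
      (forall q1 q2 : {poly R[i]},
          nf_poly c l q1 -> nf_poly c l q2 ->
          CS_conj (elem alpha p beta eta) (nf_map c q1) ->
          (CS_conj (elem alpha p beta eta) (nf_map c q2) <->
           exists zeta : R[i], zeta ^+ (l.-1) = 1 /\
             forall y, q2.[y] = zeta * q1.[y / zeta]))).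
Proof.
split; first by move=> al be eta p _; apply: involutive_elem_classes.
split; first exact: in_class_involutive.
move=> c al be eta p l hc hl sp; have [alE beE] := in_class_coefs hc; subst al be.
split; first exact: exists_nf_conj.
move=> q1 q2 nf1 nf2 conj1; rewrite -(nf_map_CS_conjP hl nf1 nf2).
split=> [conj2 | conj12]; first exact: CS_conj_trans (CS_conj_sym conj1) conj2.
exact: CS_conj_trans conj1 conj12.
Qed.
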